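(* Let $G=(V,E,H)$ be a HEDG and $X,Y,Z\subseteq V$. Then the following are equivalent: (i) $X\perp^\sigma_G Y\mid Z$; (ii) $X\perp^\sigma_{G^{\mathrm{aug}}}Y\mid Z$; (iii) $X\perp^d_{G^{\mathrm{acy}}}Y\mid Z$; (iv) $X\perp^d_{G^{\mathrm{acag}}}Y\mid Z$; (v) $X\perp^d_{(G^{\mathrm{aug}})^{\mathrm{acy}}}Y\mid Z$; (vi) $X\perp^d_{(G^{\mathrm{acy}})^{\mathrm{aug}}}Y\mid Z$.
   Context: HEDG $G=(V,E,H)$: $V$ finite, $E\subseteq V\times V$ (self-loops allowed), $H$ a simplicial complex on $V$ (contains singletons, closed under subsets), $\tilde H$ its maximal elements; $v\leftrightarrow w$ for distinct $v,w$ with $\{v,w\}\in H$. $\mathrm{Anc}^G,\mathrm{Desc}^G$ (including the node), $\mathrm{Sc}^G(v)=\mathrm{Anc}^G(v)\cap\mathrm{Desc}^G(v)$. A directed graph is regarded as a HEDG whose hyperedges are only singletons. Augmentation $G^{\mathrm{aug}}$: directed graph on $V\cup\{e_F:F\in\tilde H\}$ with edges $E$ together with $e_F\to v$ for all $v\in F$. Acyclification $G^{\mathrm{acy}}=(V,E^{\mathrm{acy}},H^{\mathrm{acy}})$: $v\to w\in E^{\mathrm{acy}}$ iff $v\notin\mathrm{Sc}^G(w)$ and some $w'\in\mathrm{Sc}^G(w)$ has $(v,w')\in E$; $H^{\mathrm{acy}}=\{F'\subseteq\bigcup_{v\in F}\mathrm{Sc}^G(v):F\in H\}$. $(G^{\mathrm{aug}})^{\mathrm{acy}}$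 is the acyclification of $G^{\mathrm{aug}}$, $(G^{\mathrm{acy}})^{\mathrm{aug}}$ the augmentation of $G^{\mathrm{acy}}$, and $G^{\mathrm{acag}}$ is the directed graph with the node set and directed edges of $(G^{\mathrm{aug}})^{\mathrm{acy}}$ but only singleton hyperedges. Paths: node sequences (repetitions allowed, $n\ge1$) with consecutive nodes joined by $\to,\leftarrow,\leftrightarrow$. d-separation $X\perp^d Y\mid Z$: every path between $X$ and $Y$ is $Z$-blocked, meaning an endnode is in $Z$, or an intermediate collider (both adjacent edges have an arrowhead at it) is not an ancestor of $Z$, or an intermediate non-collider is in $Z$. $\sigma$-separation $X\perp^\sigma Y\mid Z$: every path between $X$ and $Y$ is $Z$-$\sigma$-blocked, meaning an endnode is in $Z$, or an intermediate collider is not an ancestor of $Z$, or an intermediate non-collider $v_i\in Z$ has on the path a directed edge $v_i\to v_{i\pm1}$ pointing to a node outside the strongly connected component of $v_i$. *)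

From mathcomp Require Import all_boot.
Unset Printing Implicit Defensive.

Record hedg (V : finType) := HEDG {
  edges : rel V;               (* directed edges E (self-loops allowed) *)
  hyper : {set {set V}}
}.
Arguments HEDG {V}.
Arguments edges {V}.
Arguments hyper {V}.

Definition simplicial_complex {V : finType} (H : {set {set V}}) : Prop :=
  (forall v : V, [set v] \in H) /\
  (forall F F' : {set V}, F \in H -> F' \subset F -> F' \in H).

Definition is_hedg {V : finType} (G : hedg V) : Prop :=
  simplicial_complex (hyper G).

(* the hyperedge structure of a plain directed graph: only singletons
   (and the empty set, for closure under subsets) *)
Definition singleton_complex {V : finType} : {set {set V}} :=
  [set F : {set V} | #|F| <= 1].

Definition maxH {V : finType} (H : {set {set V}}) : {set {set V}} :=
  [set F in H | [forall F' in H, (F \subset F') ==> (F' == F)]].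

Definition bidir {V : finType} (G : hedg V) (v w : V) : bool :=
  (v != w) && ([set v; w] \in hyper G).

Definition Anc {V : finType} (G : hedg V) (v : V) : {set V} :=
  [set u | connect (edges G) u v].
Definition Desc {V : finType} (G : hedg V) (v : V) : {set V} :=
  [set w | connect (edges G) v w].
Definition Sc {V : finType} (G : hedg V) (v : V) : {set V} :=
  Anc G v :&: Desc G v.

Definition anc_of {V : finType} (G : hedg V) (u : V) (Z : {set V}) : bool :=
  [exists z in Z, u \in Anc G z].

(* Paths.  A path v_0 ... v_n is given by its start v_0 and the list of *)
(* steps (k_i, v_i), i = 1..n, where k_i records which edge joins       *)
(* v_{i-1} and v_i :  Fwd : v_{i-1} -> v_i,  Bwd : v_{i-1} <- v_i,      *)
(* Bi : v_{i-1} <-> v_i.  Repetitions of nodes are allowed, n >= 0      *)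
(* (i.e. at least one node).                                            *)
Inductive ekind := Fwd | Bwd | Bi.

Definition step_ok {V : finType} (G : hedg V) (u : V) (k : ekind) (w : V) : bool :=
  match k with
  | Fwd => edges G u w
  | Bwd => edges G w u
  | Bi => bidir G u w
  end.

Fixpoint is_path {V : finType} (G : hedg V) (u : V) (s : seq (ekind * V)) : bool :=
  match s with
  | [::] => true
  | (k, w) :: s' => step_ok G u k w && is_path G w s'
  end.

Definition pnode {V : finType} (x0 : V) (s : seq (ekind * V)) (i : nat) : V :=
  nth x0 (x0 :: map snd s) i.
(* kind of the edge between node i and node i+1 *)
Definition pkind {V : finType} (s : seq (ekind * V)) (i : nat) : ekind :=
  nth Fwd (map fst s) i.

(* arrowhead at the right end of an edge (i.e. at v_i for the edge
   between v_{i-1} and v_i) *)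
Definition head_at_right (k : ekind) : bool :=
  match k with Fwd | Bi => true | Bwd => false end.
(* arrowhead at the left end of an edge (at v_i for the edge between v_i
   and v_{i+1}) *)
Definition head_at_left (k : ekind) : bool :=
  match k with Bwd | Bi => true | Fwd => false end.

Definition is_Fwd (k : ekind) : bool := if k is Fwd then true else false.
Definition is_Bwd (k : ekind) : bool := if k is Bwd then true else false.

(* intermediate node i (0 < i < n) is a collider *)
Definition collider {V : finType} (s : seq (ekind * V)) (i : nat) : bool :=
  head_at_right (pkind s i.-1) && head_at_left (pkind s i).

Definition d_blocked {V : finType} (G : hedg V) (Z : {set V})
    (x0 : V) (s : seq (ekind * V)) : bool :=
  let n := size s in
  [|| x0 \in Z, last x0 (map snd s) \in Z |
   [exists i : 'I_n, (0 < i) &&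
     (if collider s i then ~~ anc_of G (pnode x0 s i) Z
      else pnode x0 s i \in Z)]].

(* sigma-blocking: a non-collider in Z blocks only if one of its adjacent
   path edges is a directed edge out of it pointing to a node outside its
   strongly connected component *)
Definition sigma_blocked {V : finType} (G : hedg V) (Z : {set V})
    (x0 : V) (s : seq (ekind * V)) : bool :=
  let n := size s in
  [|| x0 \in Z, last x0 (map snd s) \in Z |
   [exists i : 'I_n, (0 < i) &&
     (if collider s i then ~~ anc_of G (pnode x0 s i) Z
      else (pnode x0 s i \in Z) &&
           ((is_Bwd (pkind s i.-1) &&
               (pnode x0 s i.-1 \notin Sc G (pnode x0 s i))) ||
            (is_Fwd (pkind s i) &&
               (pnode x0 s i.+1 \notin Sc G (pnode x0 s i)))))]].

Definition d_sep {V : finType} (G : hedg V) (X Y Z : {set V}) : Prop :=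
  forall (x0 : V) (s : seq (ekind * V)),
    is_path G x0 s -> x0 \in X -> last x0 (map snd s) \in Y ->
    d_blocked G Z x0 s.

Definition sigma_sep {V : finType} (G : hedg V) (X Y Z : {set V}) : Prop :=
  forall (x0 : V) (s : seq (ekind * V)),
    is_path G x0 s -> x0 \in X -> last x0 (map snd s) \in Y ->
    sigma_blocked G Z x0 s.

Definition acy {V : finType} (G : hedg V) : hedg V :=
  HEDG (fun v w => (v \notin Sc G w) && [exists w' in Sc G w, edges G v w'])
       [set F' : {set V} | [exists F in hyper G,
                              F' \subset \bigcup_(v in F) Sc G v]].

(* Augmentation: node set V + { e_F : F maximal hyperedge }            *)
Definition aug_node {V : finType} (H : {set {set V}}) (x : V + {set V}) : bool :=
  match x with inl _ => true | inr F => F \in maxH H end.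

Definition augV {V : finType} (H : {set {set V}}) : finType :=
  {x : V + {set V} | aug_node H x}.

Definition aug_in {V : finType} (H : {set {set V}}) (v : V) : augV H :=
  exist (fun x => aug_node H x) (inl v) isT.

Definition aug_set {V : finType} (H : {set {set V}}) (X : {set V}) : {set augV H} :=
  [set aug_in H v | v in X].

Definition aug_edges {V : finType} (G : hedg V) : rel (augV (hyper G)) :=
  fun a b =>
    match val a, val b with
    | inl v, inl w => edges G v w
    | inr F, inl w => w \in F
    | _, _ => false
    end.

Definition aug {V : finType} (G : hedg V) : hedg (augV (hyper G)) :=
  HEDG (aug_edges G) (@singleton_complex (augV (hyper G))).

Definition acag {V : finType} (G : hedg V) : hedg (augV (hyper G)) :=
  HEDG (edges (acy (aug G))) (@singleton_complex (augV (hyper G))).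

From mathcomp Require Import all_boot.

Set Implicit Arguments.
Unset Strict Implicit.

(* d- and sigma-blocking are local conditions on consecutive nodes of a path,
   so separation is the absence of an open walk, described inductively.
   Acyclification turns each strongly connected component of G into a
   bidirected clique and redirects every edge entering it to all its
   members. A sigma-open walk of G crosses a component along edges that
   sigma-blocking ignores, which a d-open walk of G^acy short-cuts through the
   clique; conversely, a step of a d-open walk of G^acy is unfolded into a
   directed path inside a component of G. This gives (i) <-> (iii), and
   (ii) <-> (v) is the same fact for G^aug. The remaining graphs arise from
   G^acy by adding parentless latent nodes that represent bidirected edges
   as common parents, which preserves d-separation. *)

Section OpenWalks.
Variables (V : finType) (G : hedg V).
Variable is_open : V -> ekind -> V -> ekind -> V -> bool.

(* [open_walk y p k c]: a walk from [c] to [y] all of whose intermediate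
   nodes are open, where [c] is entered from [p] through an edge of kind [k]. *)
Inductive open_walk (y : V) : V -> ekind -> V -> Prop :=
| OpenWalkEnd p k : open_walk y p k y
| OpenWalkStep p k c k' e : step_ok G c k' e -> is_open p k c k' e ->
    open_walk y c k' e -> open_walk y p k c.

Definition open_connected (x y : V) : Prop :=
  x = y \/ exists k c, step_ok G x k c /\ open_walk y x k c.

Definition open_separated (X Y Z : {set V}) : Prop :=
  forall x y, x \in X -> y \in Y -> x \notin Z -> y \notin Z -> ~ open_connected x y.

Definition blocked (Z : {set V}) (x0 : V) (s : seq (ekind * V)) : bool :=
  [|| x0 \in Z, last x0 (map snd s) \in Z |
   [exists i : 'I_(size s), (0 < i) &&
      ~~ is_open (pnode x0 s i.-1) (pkind s i.-1) (pnode x0 s i)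
                 (pkind s i) (pnode x0 s i.+1)]].

Definition inner_open (p : V) k c (s : seq (ekind * V)) : Prop :=
  forall i, 0 < i <= size s ->
    is_open (pnode p ((k, c) :: s) i.-1) (pkind ((k, c) :: s) i.-1)
            (pnode p ((k, c) :: s) i) (pkind ((k, c) :: s) i)
            (pnode p ((k, c) :: s) i.+1).

Lemma pnode_cons (p : V) k c (s : seq (ekind * V)) i :
  i <= size s -> pnode p ((k, c) :: s) i.+1 = pnode c s i.
Proof. by move=> le_is; rewrite /pnode /= (set_nth_default c) //= size_map ltnS. Qed.

Lemma inner_open_cons p k c k' e s :
  inner_open p k c ((k', e) :: s) <-> is_open p k c k' e /\ inner_open c k' e s.
Proof.
have shift j : j < size s -> is_open
    (pnode p [:: (k, c), (k', e) & s] j.+1) (pkind [:: (k, c), (k', e) & s] j.+1)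
    (pnode p [:: (k, c), (k', e) & s] j.+2) (pkind [:: (k, c), (k', e) & s] j.+2)
    (pnode p [:: (k, c), (k', e) & s] j.+3) =
  is_open (pnode c ((k', e) :: s) j) (pkind ((k', e) :: s) j)
    (pnode c ((k', e) :: s) j.+1) (pkind ((k', e) :: s) j.+1)
    (pnode c ((k', e) :: s) j.+2).
  move=> lt_js.
  rewrite (pnode_cons p k c); last by rewrite /= ltnW // ltnW.
  rewrite (pnode_cons p k c); last by rewrite /= ltnW.
  by rewrite (pnode_cons p k c).
split=> [opens | [open_c opens] [|[|j]] //= le_js].
- split=> [|[|j] //= le_js]; first exact: (opens 1).
  by rewrite -shift //; apply: (opens j.+2).
- by rewrite shift //; apply: (opens j.+1).
Qed.

Lemma open_walk_of_path y p k c s : is_path G c s -> last c (map snd s) = y ->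
  inner_open p k c s -> open_walk y p k c.
Proof.
elim: s p k c => [|[k' e] s IHs] p k c /=; first by move=> _ <- _; apply: OpenWalkEnd.
case/andP=> step_ce path_s last_s /inner_open_cons[open_c opens].
exact: OpenWalkStep step_ce open_c (IHs _ _ _ path_s last_s opens).
Qed.

Lemma path_of_open_walk y p k c : open_walk y p k c ->
  exists s, [/\ is_path G c s, last c (map snd s) = y & inner_open p k c s].
Proof.
elim=> {p k c} [p k | p k c k' e step_ce open_c _ [s [path_s last_s opens]]].
  by exists [::]; split=> // -[|i] /andP[].
exists ((k', e) :: s); split=> //=; first by rewrite step_ce.
exact/inner_open_cons.
Qed.

Lemma blocked_paths_iff_open_separated (X Y Z : {set V}) :
  (forall x0 s, is_path G x0 s -> x0 \in X -> last x0 (map snd s) \in Y ->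
     blocked Z x0 s) <-> open_separated X Y Z.
Proof.
split=> [blocks x y Xx Yy xNZ yNZ | sep x0 s path_s Xx0 Ys].
  case=> [eq_xy | [k [c [step_xc walk_c]]]].
    have := blocks x [::] isT Xx; rewrite /blocked /= (negbTE xNZ) eq_xy /=.
    by move=> /(_ Yy) /existsP[[]].
  have [s [path_s last_s opens]] := path_of_open_walk walk_c.
  have := blocks x ((k, c) :: s); rewrite /= step_xc path_s last_s.
  move=> /(_ isT Xx Yy); rewrite /blocked /= last_s (negbTE xNZ) (negbTE yNZ) /=.
  by case/existsP=> -[i lt_is] /= /andP[i_gt0]; rewrite opens ?i_gt0.
apply/negPn/negP; rewrite /blocked !negb_or => /and3P[x0NZ sNZ /existsPn all_open].
apply: (sep x0 _ Xx0 Ys x0NZ sNZ).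
case: s path_s {Ys sNZ} all_open => [|[k c] s] /=; first by left.
case/andP=> step_x0c path_s all_open; right; exists k, c; split=> //.
apply: open_walk_of_path path_s erefl _ => i /andP[i_gt0 le_is].
by have := all_open (Ordinal (le_is : i < size ((k, c) :: s))); rewrite /= i_gt0 negbK.
Qed.

End OpenWalks.

Definition d_open (V : finType) (G : hedg V) (Z : {set V})
    (p : V) (kp : ekind) (c : V) (kn : ekind) (nx : V) : bool :=
  if head_at_right kp && head_at_left kn then anc_of G c Z else c \notin Z.

Definition sigma_open (V : finType) (G : hedg V) (Z : {set V})
    (p : V) (kp : ekind) (c : V) (kn : ekind) (nx : V) : bool :=
  if head_at_right kp && head_at_left kn then anc_of G c Z
  else ~~ [&& c \in Z & (is_Bwd kp && (p \notin Sc G c))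
                        || (is_Fwd kn && (nx \notin Sc G c))].

Section SeparationByOpenWalks.
Variables (V : finType) (G : hedg V) (X Y Z : {set V}).

Lemma d_sepE : d_sep G X Y Z <-> open_separated G (d_open G Z) X Y Z.
Proof.
apply: iff_trans (blocked_paths_iff_open_separated _ _ _ _ _).
split=> sepG x0 s path_s Xx0 Ys; move: (sepG x0 s path_s Xx0 Ys);
  rewrite /d_blocked /blocked; congr [|| _, _ | _]; apply: eq_existsb => i;
  by rewrite /d_open /collider; case: ifP; rewrite ?negbK.
Qed.

Lemma sigma_sepE : sigma_sep G X Y Z <-> open_separated G (sigma_open G Z) X Y Z.
Proof.
apply: iff_trans (blocked_paths_iff_open_separated _ _ _ _ _).
split=> sepG x0 s path_s Xx0 Ys; move: (sepG x0 s path_s Xx0 Ys);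
  rewrite /sigma_blocked /blocked; congr [|| _, _ | _]; apply: eq_existsb => i;
  by rewrite /sigma_open /collider; case: ifP; rewrite ?negbK.
Qed.

End SeparationByOpenWalks.

Section StronglyConnectedComponents.
Variables (V : finType) (G : hedg V).

Lemma inSc u v : (u \in Sc G v) = connect (edges G) u v && connect (edges G) v u.
Proof. by rewrite !inE. Qed.

Lemma Sc_refl v : v \in Sc G v.
Proof. by rewrite inSc connect0. Qed.

Lemma Sc_sym u v : (u \in Sc G v) = (v \in Sc G u).
Proof. by rewrite !inSc andbC. Qed.

Lemma Sc_trans u v w : u \in Sc G v -> v \in Sc G w -> u \in Sc G w.
Proof.
rewrite !inSc => /andP[uv vu] /andP[vw wv].
by rewrite (connect_trans uv vw) (connect_trans wv vu).
Qed.

Lemma Sc_eq u v : u \in Sc G v -> Sc G u = Sc G v.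
Proof.
move=> uv; apply/setP => w; apply/idP/idP => [wu | wv]; first exact: Sc_trans wu uv.
by apply: Sc_trans wv _; rewrite Sc_sym.
Qed.

Lemma anc_ofP c (Z : {set V}) :
  reflect (exists2 z, z \in Z & connect (edges G) c z) (anc_of G c Z).
Proof.
apply: (iffP existsP) => [[z /andP[Zz]] | [z Zz cz]]; first by rewrite inE; exists z.
by exists z; rewrite Zz inE.
Qed.

End StronglyConnectedComponents.

Section DWalks.
Variables (V : finType) (G : hedg V) (Z : {set V}) (y : V).

(* [d_walk h d]: a d-open walk from [d] to [y], where [h] tells whether the
   edge through which [d] is entered has an arrowhead at [d]. *)
Inductive d_walk : bool -> V -> Prop :=
| DWalkEnd h : d_walk h y
| DWalkStep h d k e : step_ok G d k e ->
    (if h && head_at_left k then anc_of G d Z else d \notin Z) ->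
    d_walk (head_at_right k) e -> d_walk h d.

Lemma d_open_walkE p k c :
  open_walk G (d_open G Z) y p k c <-> d_walk (head_at_right k) c.
Proof.
split=> [|walk_c].
  elim=> {p k c} [p k | p k c k' e step_ce open_c _ walk_e]; first exact: DWalkEnd.
  exact: DWalkStep step_ce open_c walk_e.
suff walk_h b d : d_walk b d ->
    forall p k, head_at_right k = b -> open_walk G (d_open G Z) y p k d.
  exact: walk_h walk_c p k erefl.
elim=> {b d} [b | b d k' e step_de open_d _ IH] p' k'' head_k''.
  exact: OpenWalkEnd.
by apply: OpenWalkStep step_de _ (IH _ _ erefl); rewrite /d_open head_k''.
Qed.

Lemma d_open_connectedE x :
  x \notin Z -> open_connected G (d_open G Z) x y <-> d_walk false x.
Proof.
move=> xNZ; split=> [[-> | [k [c [step_xc walk_c]]]] | ]; first exact: DWalkEnd.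
  by move/d_open_walkE in walk_c; apply: (DWalkStep step_xc); rewrite /= ?xNZ.
move/(d_open_walkE x Bwd x); case=> [p k | p k c k' e step_ce _ walk_e]; first by left.
by right; exists k', e.
Qed.

End DWalks.

(* The walk is started by a fictitious [Bwd] entry into [x] from [x]
   itself: this makes [x] a non-collider, open since [x \notin Z]. *)
Lemma sigma_open_connectedE (V : finType) (G : hedg V) (Z : {set V}) x y :
  x \notin Z ->
  open_connected G (sigma_open G Z) x y <-> open_walk G (sigma_open G Z) y x Bwd x.
Proof.
move=> xNZ; split=> [[<- | [k [c [step_xc walk_c]]]] | ]; first exact: OpenWalkEnd.
  by apply: OpenWalkStep step_xc _ walk_c; rewrite /sigma_open /= (negbTE xNZ).
by case=> [p k | p k c k' e step_ce _ walk_e]; [left | right; exists k', e].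
Qed.

Lemma sub2set (T : finType) (a b : T) (S : {set T}) :
  ([set a; b] \subset S) = (a \in S) && (b \in S).
Proof. by rewrite subUset !sub1set. Qed.

Lemma bidirC (V : finType) (G : hedg V) u w : bidir G u w = bidir G w u.
Proof. by rewrite /bidir eq_sym setUC. Qed.

Section Acyclification.
Variables (V : finType) (G : hedg V).

Lemma acy_edgeI v w w' :
  v \notin Sc G w -> w' \in Sc G w -> edges G v w' -> edges (acy G) v w.
Proof. by move=> vNw w'w vw'; rewrite /= vNw; apply/existsP; exists w'; rewrite w'w. Qed.

Lemma acy_edgeE v w : edges (acy G) v w ->
  v \notin Sc G w /\ exists2 w', w' \in Sc G w & edges G v w'.
Proof. by case/andP=> vNw /existsP[w' /andP[w'w vw']]; split=> //; exists w'. Qed.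

Lemma connect_acy u w : connect (edges (acy G)) u w -> connect (edges G) u w.
Proof.
apply: connect_sub => a b /acy_edgeE[_ [b' b'b ab']].
by apply: connect_trans (connect1 ab') _; move: b'b; rewrite inSc => /andP[].
Qed.

Lemma anc_of_acy c (Z : {set V}) : anc_of (acy G) c Z -> anc_of G c Z.
Proof. by case/anc_ofP=> z Zz cz; apply/anc_ofP; exists z; rewrite ?connect_acy. Qed.

Lemma connect_acy_Sc c z : connect (edges G) c z ->
  exists2 c', c' \in Sc G c & connect (edges (acy G)) c' z.
Proof.
case/connectP=> s; elim: s c => [|d s IHs] c /=.
  by move=> _ ->; exists c; rewrite ?Sc_refl.
case/andP=> cd path_s last_s; have [d' d'd d'z] := IHs d path_s last_s.
have [cd_Sc | cNd] := boolP (c \in Sc G d); first by exists d'; rewrite // (Sc_eq cd_Sc).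
exists c; rewrite ?Sc_refl //; apply: connect_trans d'z; apply: connect1.
by apply: (acy_edgeI _ _ cd); rewrite (Sc_eq d'd) ?Sc_refl.
Qed.

Lemma anc_of_acy_Sc c (Z : {set V}) : anc_of G c Z ->
  exists2 c', c' \in Sc G c & anc_of (acy G) c' Z.
Proof.
case/anc_ofP=> z Zz /connect_acy_Sc[c' c'c c'z].
by exists c' => //; apply/anc_ofP; exists z.
Qed.

Lemma bidir_acyI u w F a b : u != w -> F \in hyper G ->
  a \in F -> u \in Sc G a -> b \in F -> w \in Sc G b -> bidir (acy G) u w.
Proof.
move=> neq_uw HF Fa ua Fb wb; rewrite /bidir neq_uw /= inE; apply/existsP; exists F.
by rewrite HF sub2set /=; apply/andP; split; apply/bigcupP; [exists a | exists b].
Qed.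

Lemma bidir_acyE u w : bidir (acy G) u w -> exists F, [/\ F \in hyper G,
  exists2 a, a \in F & u \in Sc G a & exists2 b, b \in F & w \in Sc G b].
Proof.
case/andP=> _; rewrite /= inE => /existsP[F /andP[HF]].
rewrite sub2set => /andP[/bigcupP[a Fa ua] /bigcupP[b Fb wb]].
by exists F; split=> //; [exists a | exists b].
Qed.

Hypothesis hG : is_hedg G.

Lemma acy_hedg : is_hedg (acy G).
Proof.
split=> [v | F F']; rewrite !inE.
  apply/existsP; exists [set v]; rewrite hG.1 sub1set /=.
  by apply/bigcupP; exists v; rewrite ?in_set1 ?Sc_refl.
by case/existsP=> F0 /andP[HF0 sub_F] sub_F'; apply/existsP; exists F0;
  rewrite HF0 (subset_trans sub_F').
Qed.

Lemma bidir_acy_Sc c d e : d != e -> d \in Sc G c -> e \in Sc G c -> bidir (acy G) d e.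
Proof.
by move=> neq_de dc ec; apply: (bidir_acyI neq_de (hG.1 c)) dc _ ec; rewrite in_set1.
Qed.

Lemma bidir_acy_Sc_bidir d e : bidir (acy G) d e ->
  exists a b, [/\ d \in Sc G a, e \in Sc G b & a = b \/ bidir G a b].
Proof.
case/bidir_acyE=> F [HF [a Fa da] [b Fb eb]]; exists a, b; split=> //.
have [-> | neq_ab] := eqVneq a b; [by left | right].
by rewrite /bidir neq_ab (hG.2 F) // sub2set Fa.
Qed.

End Acyclification.

Section SigmaToD.
Variables (V : finType) (G : hedg V) (Z : {set V}) (y : V).
Hypotheses (hG : is_hedg G) (yNZ : y \notin Z).

Local Notation A := (acy G).
Local Notation d_walk := (d_walk A Z y).
Local Notation sigma_walk := (open_walk G (sigma_open G Z) y).

(* The ways in which a sigma-open walk entering the strongly connected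
   component of [c] through an edge of kind [k] continues as a d-open walk of
   [acy G] out of that component. *)
Variant component_exit (k : ekind) (c : V) : Prop :=
| ExitAtTarget of y \in Sc G c
| ExitByTail w e of w \in Sc G c & w \notin Z & edges A w e & d_walk true e
| ExitByHead of
    (forall d, d \in Sc G c -> exists k' e,
       [/\ head_at_left k', step_ok A d k' e & d_walk (head_at_right k') e])
  & (head_at_right k -> exists2 s, s \in Sc G c & anc_of A s Z).

Lemma component_exit_head k c : component_exit k c -> head_at_right k ->
  exists2 c', c' \in Sc G c & d_walk true c'.
Proof.
case=> [yc | w e wc wNZ we walk_e | exits anc_Z] head_k.
- by exists y; last exact: DWalkEnd.
- by exists w; last exact: (DWalkStep (k := Fwd) we).
- have [s sc sZ] := anc_Z head_k; have [k' [e [head_k' step_se walk_e]]] := exits s sc.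
  by exists s; last by apply: DWalkStep step_se _ walk_e; rewrite head_k'.
Qed.

Lemma component_exit_start k c : component_exit k c -> c \notin Z -> d_walk false c.
Proof.
case=> [yc | w e wc wNZ we walk_e | exits _] cNZ.
- have [-> | neq_cy] := eqVneq c y; first exact: DWalkEnd.
  apply: (DWalkStep (k := Bi) (e := y)) => //=; last exact: DWalkEnd.
  exact: (bidir_acy_Sc hG neq_cy (Sc_refl _ _) yc).
- have walk_w h : d_walk h w by apply: (DWalkStep (k := Fwd) we); rewrite ?andbF.
  have [-> | neq_cw] := eqVneq c w; first exact: walk_w.
  apply: (DWalkStep (k := Bi) (e := w)) (walk_w _) => //=.
  exact: (bidir_acy_Sc hG neq_cw (Sc_refl _ _) wc).
- by have [k' [e [_ step_ce walk_e]]] := exits c (Sc_refl _ _); apply: DWalkStep walk_e.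
Qed.

Lemma sigma_walk_Bwd_notin p c : sigma_walk p Bwd c -> p \notin Sc G c -> c \notin Z.
Proof.
have notin_Z k : sigma_walk p k c -> k = Bwd -> p \notin Sc G c -> c \notin Z.
  case=> [// | {}p {}k {}c k' e _ open_c _ eq_k pNc]; subst k.
  by apply: contraL open_c => cZ; rewrite /sigma_open /= cZ pNc.
by move=> walk_c; apply: notin_Z walk_c erefl.
Qed.

Lemma collider_component_exit p k c k' e :
  sigma_open G Z p k c k' e -> head_at_right k -> head_at_left k' ->
  exists2 s, s \in Sc G c & anc_of A s Z.
Proof.
by rewrite /sigma_open => + head_k head_k'; rewrite head_k head_k' => /anc_of_acy_Sc.
Qed.

Lemma component_exit_within p k c k' e : e \in Sc G c ->
  sigma_open G Z p k c k' e -> component_exit k' e -> component_exit k c.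
Proof.
move=> ec open_c; have eq_Sc := Sc_eq ec.
case=> [ye | w e' we wNZ we' walk_e' | exits anc_Z].
- by apply: ExitAtTarget; rewrite -eq_Sc.
- by apply: (ExitByTail _ _ wNZ we' walk_e'); rewrite -eq_Sc.
- apply: ExitByHead => [d | head_k]; first by rewrite -eq_Sc; apply: exits.
  case head_k': (head_at_left k').
    exact: collider_component_exit open_c head_k head_k'.
  by rewrite -eq_Sc; apply: anc_Z; case: k' {open_c exits} head_k'.
Qed.

Lemma component_exit_of_sigma_walk p k c : sigma_walk p k c -> component_exit k c.
Proof.
elim=> {p k c} [p k | p k c k' e step_ce open_c walk_e exit_e].
  exact/ExitAtTarget/Sc_refl.
have [ec | eNc] := boolP (e \in Sc G c); first exact: component_exit_within open_c exit_e.
have cNe : c \notin Sc G e by rewrite Sc_sym.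
have exit_collider := collider_component_exit open_c.
move: step_ce open_c walk_e exit_e exit_collider.
case: k' => step_ce open_c walk_e exit_e exit_collider.
- have [c' c'e walk_c'] := component_exit_head exit_e isT.
  apply: (ExitByTail _ (Sc_refl _ c) _ _ walk_c').
    by apply: contraL open_c => cZ; rewrite /sigma_open /= andbF /= cZ eNc orbT.
  by apply: (acy_edgeI _ _ step_ce); rewrite (Sc_eq c'e) ?Sc_refl.
- apply: ExitByHead => [d dc | head_k]; last exact: exit_collider.
  exists Bwd, e; split=> //=.
    by apply: (acy_edgeI _ _ step_ce); rewrite (Sc_eq dc) ?Sc_refl.
  exact: component_exit_start exit_e (sigma_walk_Bwd_notin walk_e cNe).
- apply: ExitByHead => [d dc | head_k]; last exact: exit_collider.
  have [c' c'e walk_c'] := component_exit_head exit_e isT.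
  exists Bi, c'; split=> //=; case/andP: step_ce => _ Hce.
  apply: (bidir_acyI _ Hce (set21 c e) dc (set22 c e) c'e).
  apply: contra eNc => /eqP eq_dc'; rewrite -eq_dc' in c'e.
  by apply: Sc_trans dc; rewrite Sc_sym.
Qed.

Lemma sigma_connected_d_connected x : x \notin Z ->
  open_connected G (sigma_open G Z) x y -> open_connected A (d_open A Z) x y.
Proof.
move=> xNZ /(sigma_open_connectedE _ _ xNZ) walk_x; apply/(d_open_connectedE _ _ xNZ).
exact: component_exit_start (component_exit_of_sigma_walk walk_x) xNZ.
Qed.

End SigmaToD.

Section DToSigma.
Variables (V : finType) (G : hedg V) (Z : {set V}) (y : V).
Hypothesis hG : is_hedg G.

Local Notation A := (acy G).
Local Notation d_walk := (d_walk A Z y).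
Local Notation sigma_walk := (open_walk G (sigma_open G Z) y).

Definition walk_from_head x := forall p k, head_at_right k -> sigma_walk p k x.

Definition exit_with_head x :=
  exists k nx, [/\ head_at_left k, step_ok G x k nx & sigma_walk x k nx].

Lemma sigma_open_of_acy p k d kn nx :
  (if head_at_right k && head_at_left kn then anc_of A d Z else d \notin Z) ->
  sigma_open G Z p k d kn nx.
Proof. by rewrite /sigma_open; case: ifP => _; [apply: anc_of_acy | move/negbTE ->]. Qed.

(* A directed edge leaving [d] inside its strongly connected component
   never makes [d] sigma-blocking. *)
Lemma sigma_walk_Fwd_within p k d c : edges G d c -> c \in Sc G d ->
  walk_from_head c -> (is_Bwd k -> d \notin Z) -> sigma_walk p k d.
Proof.
move=> dc cd walk_c dNZ; apply: (OpenWalkStep (k' := Fwd) dc _ (walk_c d Fwd isT)).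
rewrite /sigma_open andbF /= cd orbF.
by apply/negP => /and3P[dZ /dNZ]; rewrite dZ.
Qed.

Lemma walk_from_head_Sc_step b e : e \in Sc G b -> walk_from_head e ->
  b = e \/ exists c, [/\ edges G b c, c \in Sc G b & walk_from_head c].
Proof.
rewrite inSc => /andP[eb /connectP[s path_s eq_e]]; subst e.
elim: s b path_s eb => [|c s IHs] b /=; first by left.
case/andP=> bc path_s eb walk_e; right; exists c.
have cb : c \in Sc G b.
  by rewrite inSc (connect1 bc) (connect_trans _ eb) //; apply/connectP; exists s.
split=> //; have ec := connect_trans eb (connect1 bc).
case: (IHs c path_s ec walk_e) => [-> // | [c' [cc' c'c walk_c']]].
by move=> p k head_k; apply: (sigma_walk_Fwd_within _ cc' c'c walk_c'); case: k head_k.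
Qed.

Lemma walk_from_head_Sc b e : e \in Sc G b -> walk_from_head e -> walk_from_head b.
Proof.
move=> eb walk_e.
case: (walk_from_head_Sc_step eb walk_e) => [-> // | [c [bc cb walk_c]]].
by move=> p k head_k; apply: (sigma_walk_Fwd_within _ bc cb walk_c); case: k head_k.
Qed.

Lemma exit_with_head_Sc a d : d \in Sc G a -> exit_with_head a -> exit_with_head d.
Proof.
rewrite inSc => /andP[da /connectP[s path_s eq_d]]; subst d.
elim: s a path_s da => [|c s IHs] a //= /andP[ac path_s] da.
case=> k [nx [head_k step_a walk_nx]].
apply: (IHs c path_s (connect_trans da (connect1 ac))).
exists Bwd, a; split=> //; apply: OpenWalkStep step_a _ walk_nx.
have ca : c \in Sc G a.
  by rewrite inSc (connect1 ac) (connect_trans _ da) //; apply/connectP; exists s.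
by rewrite /sigma_open /= ca; case: k head_k => //= _; rewrite andbF.
Qed.

Lemma sigma_walk_of_exit_with_head p k d :
  (if head_at_right k then anc_of A d Z else d \notin Z) ->
  exit_with_head d -> sigma_walk p k d.
Proof.
move=> open_d [kx [nx [head_kx step_d walk_nx]]].
by apply: OpenWalkStep step_d _ walk_nx; apply: sigma_open_of_acy; rewrite head_kx andbT.
Qed.

Lemma sigma_walk_of_d_walk h d : d_walk h d ->
  forall p k, head_at_right k = h -> sigma_walk p k d.
Proof.
elim=> {h d} [h | h d ka e step_de open_d _ IH] p k head_k.
  exact: OpenWalkEnd.
rewrite -head_k in open_d.
case: ka step_de open_d IH => step_de open_d IH.
- have walk_e : walk_from_head e := IH.
  have [_ [e' e'e de']] := acy_edgeE step_de.
  apply: (OpenWalkStep (k' := Fwd) de' (sigma_open_of_acy _ _ open_d)).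
  by apply: (walk_from_head_Sc _ walk_e); rewrite // Sc_sym.
- rewrite andbT in open_d; apply: (sigma_walk_of_exit_with_head _ open_d).
  have [_ [d' d'd ed']] := acy_edgeE step_de.
  apply: (exit_with_head_Sc (a := d')); first by rewrite Sc_sym.
  by exists Bwd, e; split=> //; apply: IH.
- have walk_e : walk_from_head e := IH.
  rewrite andbT in open_d.
  have [ed | eNd] := boolP (e \in Sc G d).
    case: (walk_from_head_Sc_step ed walk_e) => [eq_de | [c [dc cd walk_c]]].
      by case/andP: step_de; rewrite eq_de eqxx.
    by apply: (sigma_walk_Fwd_within _ dc cd walk_c); case: k open_d {head_k}.
  apply: (sigma_walk_of_exit_with_head _ open_d).
  have [a [b [da eb [eq_ab | ab]]]] := bidir_acy_Sc_bidir hG step_de.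
    by rewrite eq_ab in da; case/negP: eNd; apply: Sc_trans eb _; rewrite Sc_sym.
  apply: exit_with_head_Sc da _; exists Bi, b; split=> //.
  by apply: (walk_from_head_Sc eb walk_e).
Qed.

Lemma d_connected_sigma_connected x : x \notin Z ->
  open_connected A (d_open A Z) x y -> open_connected G (sigma_open G Z) x y.
Proof.
move=> xNZ /(d_open_connectedE _ _ xNZ) walk_x; apply/(sigma_open_connectedE _ _ xNZ).
exact: sigma_walk_of_d_walk walk_x x Bwd erefl.
Qed.

End DToSigma.

Theorem sigma_sep_acy (V : finType) (G : hedg V) (X Y Z : {set V}) :
  is_hedg G -> sigma_sep G X Y Z <-> d_sep (acy G) X Y Z.
Proof.
move=> hG; split=> [/sigma_sepE sep | /d_sepE sep]; [apply/d_sepE | apply/sigma_sepE];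
  move=> x y Xx Yy xNZ yNZ open_xy; apply: (sep x y Xx Yy xNZ yNZ).
- exact: (d_connected_sigma_connected hG xNZ open_xy).
- exact: (sigma_connected_d_connected hG yNZ xNZ open_xy).
Qed.

Section LatentEmbedding.
Variables (V W : finType) (G : hedg V) (G' : hedg W) (i : V -> W).

(* [G'] arises from [G] by renaming nodes along [i] and adding parentless
   latent nodes, a bidirected edge [u <-> w] of [G] being represented in
   [G'] either by itself or by a latent common parent [u <- l -> w]. *)
Record latent_embedding : Prop := {
  latent_inj : injective i;
  latent_edges u w : edges G' (i u) (i w) = edges G u w;
  latent_no_parent a l : l \notin codom i -> ~~ edges G' a l;
  latent_no_bidir a l : l \notin codom i -> ~~ bidir G' a l;
  latent_bidir u w : bidir G' (i u) (i w) -> bidir G u w;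
  latent_represents_bidir u w : bidir G u w -> bidir G' (i u) (i w) \/
    exists l, [/\ l \notin codom i, edges G' l (i u) & edges G' l (i w)];
  latent_fork_bidir l u w : l \notin codom i ->
    edges G' l (i u) -> edges G' l (i w) -> u != w -> bidir G u w
}.

Hypothesis emb : latent_embedding.

Lemma latent_connect u w : connect (edges G') (i u) (i w) = connect (edges G) u w.
Proof.
apply/idP/idP => /connectP[s path_s eq_w].
  elim: s u path_s eq_w => [|b s IHs] u /=; first by move=> _ /(latent_inj emb) ->.
  case/andP=> ub path_s eq_w; have [/codomP[v eq_b] | bNi] := boolP (b \in codom i).
    rewrite eq_b (latent_edges emb) in ub path_s eq_w.
    exact: connect_trans (connect1 ub) (IHs v path_s eq_w).
  by rewrite (negbTE (latent_no_parent emb _ bNi)) in ub.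
rewrite {w}eq_w; elim: s u path_s => [|v s IHs] u /=; first by rewrite connect0.
case/andP=> uv path_s.
by rewrite (connect_trans (connect1 _) (IHs v path_s)) ?(latent_edges emb).
Qed.

Variable Z : {set V}.

Lemma latent_anc_of u : anc_of G' (i u) (i @: Z) = anc_of G u Z.
Proof.
apply/anc_ofP/anc_ofP => [[_ /imsetP[z Zz ->]] | [z Zz]].
  by rewrite latent_connect; exists z.
by rewrite -latent_connect; exists (i z); rewrite ?imset_f.
Qed.

Lemma latent_mem u : (i u \in i @: Z) = (u \in Z).
Proof. exact/mem_imset/(latent_inj emb). Qed.

Lemma latent_notin l : l \notin codom i -> l \notin i @: Z.
Proof. by apply: contra => /imsetP[z _ ->]; apply: codom_f. Qed.

Lemma latent_d_open_at h k u :
  (if h && head_at_left k then anc_of G' (i u) (i @: Z) else i u \notin i @: Z) =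
  (if h && head_at_left k then anc_of G u Z else u \notin Z).
Proof. by rewrite latent_anc_of latent_mem. Qed.

Variable y : V.

Lemma d_walk_latent h u : d_walk G Z y h u -> d_walk G' (i @: Z) (i y) h (i u).
Proof.
elim=> {h u} [h | h u k w step_uw open_u _ IH]; first exact: DWalkEnd.
rewrite -latent_d_open_at in open_u.
case: k step_uw open_u IH => step_uw open_u IH.
- by apply: DWalkStep IH; rewrite //= (latent_edges emb).
- by apply: DWalkStep IH; rewrite //= (latent_edges emb).
- case: (latent_represents_bidir emb step_uw) => [bidir_uw | [l [lNi lu lw]]].
    exact: DWalkStep IH.
  apply: (DWalkStep (k := Bwd) lu open_u).
  by apply: (DWalkStep (k := Fwd) lw) IH; rewrite /= latent_notin.
Qed.

Lemma d_walk_reenter b h u : d_walk G Z y b u ->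
  (if h then anc_of G u Z else u \notin Z) -> d_walk G Z y h u.
Proof.
case=> [b' | b' {}u k w step_uw open_u walk_w] open_h; first exact: DWalkEnd.
apply: DWalkStep step_uw _ walk_w.
by case: h open_h; case: (head_at_left k) open_u; rewrite ?andbF.
Qed.

(* Latent nodes have no parents and no bidirected edges, so a d-open walk of
   [G'] leaves a latent node [c] through an edge [c -> i b]. *)
Definition latent_d_walk h c :=
  (forall u, c = i u -> d_walk G Z y h u) /\
  (c \notin codom i -> exists2 b, edges G' c (i b) & d_walk G Z y true b).

Lemma latent_d_walk_of_d_walk h c : d_walk G' (i @: Z) (i y) h c -> latent_d_walk h c.
Proof.
elim=> {h c} [h | h c k e step_ce open_c _ [IHi IHl]].
  by split=> [u /(latent_inj emb) -> | /negP[]]; [apply: DWalkEnd | apply: codom_f].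
split=> [u eq_c | cNi]; last first.
  case: k step_ce IHi {open_c IHl} => step_ce IHi.
  - have [/codomP[v eq_e] | eNi] := boolP (e \in codom i).
      by rewrite eq_e in step_ce; exists v; last exact: IHi.
    by rewrite /= (negbTE (latent_no_parent emb _ eNi)) in step_ce.
  - by rewrite /= (negbTE (latent_no_parent emb _ cNi)) in step_ce.
  - by rewrite /= bidirC (negbTE (latent_no_bidir emb _ cNi)) in step_ce.
rewrite {c}eq_c latent_d_open_at in step_ce open_c *.
have [/codomP[v eq_e] | eNi] := boolP (e \in codom i).
  rewrite eq_e in step_ce IHi; apply: DWalkStep (IHi v erefl) => //.
  case: k step_ce {open_c IHi IHl} => /=; rewrite ?latent_edges //.
  exact: latent_bidir.
case: k step_ce open_c {IHi} => step_ce open_c.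
- by rewrite /= (negbTE (latent_no_parent emb _ eNi)) in step_ce.
- have [b eb walk_b] := IHl eNi.
  have [eq_ub | neq_ub] := eqVneq u b.
    by rewrite -eq_ub in walk_b; apply: d_walk_reenter walk_b _; case: h open_c.
  have bidir_ub := latent_fork_bidir emb eNi step_ce eb neq_ub.
  exact: (DWalkStep (k := Bi) bidir_ub open_c walk_b).
- by rewrite /= (negbTE (latent_no_bidir emb _ eNi)) in step_ce.
Qed.

End LatentEmbedding.

Theorem d_sep_latent_embedding (V W : finType) (G : hedg V) (G' : hedg W) (i : V -> W)
    (X Y Z : {set V}) :
  latent_embedding G G' i -> d_sep G X Y Z <-> d_sep G' (i @: X) (i @: Y) (i @: Z).
Proof.
move=> emb; split=> /d_sepE sep; apply/d_sepE.
- move=> _ _ /imsetP[x Xx ->] /imsetP[y Yy ->]; rewrite !(latent_mem emb) => xNZ yNZ.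
  have ixNZ : i x \notin i @: Z by rewrite (latent_mem emb).
  move=> /(d_open_connectedE _ _ ixNZ) walk_x.
  apply: (sep x y Xx Yy xNZ yNZ); apply/(d_open_connectedE _ _ xNZ).
  exact: (latent_d_walk_of_d_walk emb walk_x).1 x erefl.
- move=> x y Xx Yy xNZ yNZ /(d_open_connectedE _ _ xNZ) walk_x.
  have ixNZ : i x \notin i @: Z by rewrite (latent_mem emb).
  apply: (sep (i x) (i y)); rewrite ?(latent_mem emb) ?imset_f //.
  exact/(d_open_connectedE _ _ ixNZ)/(d_walk_latent emb).
Qed.

Section MaximalHyperedges.
Variables (V : finType) (H : {set {set V}}).

Lemma maxH_sub F : F \in maxH H -> F \in H.
Proof. by rewrite inE => /andP[]. Qed.

Lemma maxH_exists F : F \in H -> exists2 F', F' \in maxH H & F \subset F'.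
Proof.
move=> HF; have [F' /maxsetP[HF' maxF'] subF] := maxset_exists (P := [pred B in H]) HF.
exists F' => //; rewrite inE; apply/andP; split; first exact: HF'.
by apply/forall_inP => B HB; apply/implyP => /(maxF' B HB) ->.
Qed.

Lemma aug_in_inj : injective (aug_in H).
Proof. by move=> u w /(congr1 val) [->]. Qed.

Lemma aug_latent (b : augV H) : b \notin codom (aug_in H) ->
  exists2 F, val b = inr F & F \in maxH H.
Proof.
case: b => -[v | F] Fmax bNi; last by exists F.
by case/negP: bNi; apply/codomP; exists v; apply: val_inj.
Qed.

Lemma aug_hyper_latent F (Fmax : aug_node H (inr F)) :
  exist _ (inr F) Fmax \notin codom (aug_in H).
Proof. by apply/codomP => -[v /(congr1 val)]. Qed.

End MaximalHyperedges.

Section DirectedGraphs.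
Variables (V : finType) (e : rel V).

Lemma bidir_singleton_complex a b : bidir (HEDG e singleton_complex) a b = false.
Proof. by rewrite /bidir /= inE cards2; case: (a != b). Qed.

Lemma singleton_complex_hedg : is_hedg (HEDG e singleton_complex).
Proof.
split=> [v | F F']; first by rewrite /= inE cards1.
by rewrite /= !inE => F_le1 /subset_leq_card /leq_trans; apply.
Qed.

End DirectedGraphs.

Section Augmentation.
Variables (V : finType) (G : hedg V).
Hypothesis hG : is_hedg G.

Local Notation i := (aug_in (hyper G)).

Lemma aug_no_parent a l : l \notin codom i -> edges (aug G) a l = false.
Proof. by case/aug_latent=> F eq_l _; rewrite /= /aug_edges eq_l; case: (val a). Qed.

Lemma aug_latent_embedding : latent_embedding G (aug G) i.
Proof.
split=> //.
- exact: aug_in_inj.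
- by move=> a l /(aug_no_parent a) ->.
- by move=> a l _; rewrite bidir_singleton_complex.
- by move=> u w; rewrite bidir_singleton_complex.
- move=> u w /andP[_ Huw]; right; have [F Fmax subF] := maxH_exists Huw.
  exists (exist _ (inr F) Fmax); rewrite aug_hyper_latent.
  by move: subF; rewrite sub2set => /andP[Fu Fw]; split; [| exact: Fu | exact: Fw].
- move=> l u w /aug_latent[F eq_l Fmax]; rewrite /= /aug_edges eq_l /= => Fu Fw neq_uw.
  rewrite /bidir neq_uw /=; apply: (hG.2 F _ (maxH_sub Fmax)).
  by rewrite sub2set Fu.
Qed.

End Augmentation.

Section AcyclifiedAugmentation.
Variables (V : finType) (G : hedg V).
Hypothesis hG : is_hedg G.

Local Notation i := (aug_in (hyper G)).
Local Notation AG := (aug G).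
Local Notation AA := (acy (aug G)).

Lemma connect_aug_latent a l : l \notin codom i -> connect (edges AG) a l -> a = l.
Proof.
move=> lNi /connectP[s]; elim/last_ind: s => [_ -> // | s c _].
by rewrite rcons_path last_rcons => /andP[_ + eq_l]; rewrite -eq_l aug_no_parent.
Qed.

Lemma Sc_aug_latent l x : l \notin codom i -> x \in Sc AG l -> x = l.
Proof. by move=> lNi; rewrite inSc => /andP[/(connect_aug_latent lNi)]. Qed.

Lemma Sc_aug_in u w : (i u \in Sc AG (i w)) = (u \in Sc G w).
Proof. by rewrite !inSc !(latent_connect (aug_latent_embedding hG)). Qed.

Lemma Sc_aug_inP x w : x \in Sc AG (i w) -> exists2 v, x = i v & v \in Sc G w.
Proof.
have [/codomP[v ->] | xNi] := boolP (x \in codom i); first by rewrite Sc_aug_in; exists v.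
by rewrite Sc_sym => /(Sc_aug_latent xNi) eq_x; rewrite -eq_x codom_f in xNi.
Qed.

Lemma acy_aug_edges u w : edges AA (i u) (i w) = edges (acy G) u w.
Proof.
apply/idP/idP => /acy_edgeE[uNw [x]].
  by case/Sc_aug_inP=> v -> vw uv; apply: (acy_edgeI _ vw uv); rewrite -Sc_aug_in.
by move=> xw ux; apply: (acy_edgeI (w' := i x)); rewrite ?Sc_aug_in.
Qed.

Lemma acy_aug_no_parent a l : l \notin codom i -> edges AA a l = false.
Proof.
move=> lNi; apply/negbTE/negP => /acy_edgeE[_ [x /(Sc_aug_latent lNi) -> al]].
by rewrite aug_no_parent in al.
Qed.

Lemma acy_aug_latent_edgeP l u : l \notin codom i -> edges AA l (i u) ->
  exists F, [/\ val l = inr F, F \in maxH (hyper G) & exists2 a, a \in F & u \in Sc G a].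
Proof.
case/aug_latent=> F eq_l Fmax /acy_edgeE[_ [x /Sc_aug_inP[a -> au] la]].
exists F; split=> //; exists a; last by rewrite Sc_sym.
by move: la; rewrite /= /aug_edges eq_l.
Qed.

Lemma acy_aug_latent_edge F (Fmax : F \in maxH (hyper G)) a u :
  a \in F -> u \in Sc G a -> edges AA (exist _ (inr F) Fmax) (i u).
Proof.
move=> Fa ua; apply: (acy_edgeI (w' := i a)) => //; last by rewrite Sc_aug_in Sc_sym.
apply/negP; rewrite Sc_sym => /(Sc_aug_latent (aug_hyper_latent Fmax)) /(congr1 val).
by [].
Qed.

Lemma acy_aug_represents_bidir u w : bidir (acy G) u w ->
  exists l, [/\ l \notin codom i, edges AA l (i u) & edges AA l (i w)].
Proof.
case/bidir_acyE=> F [HF [a Fa ua] [b Fb wb]]; have [F' F'max subF] := maxH_exists HF.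
exists (exist _ (inr F') F'max); rewrite aug_hyper_latent.
split=> //; [exact: (acy_aug_latent_edge _ (subsetP subF _ Fa) ua) |
               exact: (acy_aug_latent_edge _ (subsetP subF _ Fb) wb)].
Qed.

Lemma acy_aug_fork_bidir l u w : l \notin codom i ->
  edges AA l (i u) -> edges AA l (i w) -> u != w -> bidir (acy G) u w.
Proof.
move=> lNi /(acy_aug_latent_edgeP lNi)[F [eq_l Fmax [a Fa ua]]].
case/(acy_aug_latent_edgeP lNi)=> F' [eq_l' _ [b F'b wb]] neq_uw.
rewrite eq_l in eq_l'; case: eq_l' F'b => <- Fb.
exact: bidir_acyI neq_uw (maxH_sub Fmax) Fa ua Fb wb.
Qed.

(* The hyperedges of [aug G] have at most one node. *)
Lemma bidir_acy_augE a b : bidir AA a b -> exists v, a \in Sc AG v /\ b \in Sc AG v.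
Proof.
case/bidir_acyE=> F [+ [a' Fa' aa'] [b' Fb' bb']]; rewrite /= inE => F_le1.
have eq_b'a' := card_le1_eqP F_le1 a' b' Fa' Fb'.
by exists a'; split; rewrite // -eq_b'a'.
Qed.

Lemma acy_aug_latent_no_bidir a l : l \notin codom i -> ~~ bidir AA a l.
Proof.
move=> lNi; apply/negP => bidir_al; have [v [av lv]] := bidir_acy_augE bidir_al.
have eq_v : v = l by apply: Sc_aug_latent lNi _; rewrite Sc_sym.
move: av; rewrite eq_v => /(Sc_aug_latent lNi) eq_a.
by case/andP: bidir_al; rewrite eq_a eqxx.
Qed.

Lemma acy_aug_bidir u w : bidir AA (i u) (i w) -> bidir (acy G) u w.
Proof.
move=> bidir_uw; have [x [ux wx]] := bidir_acy_augE bidir_uw.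
move: ux; rewrite Sc_sym => /Sc_aug_inP[v eq_x vu]; rewrite eq_x Sc_aug_in in wx.
apply: (bidir_acy_Sc hG _ _ wx); last by rewrite Sc_sym.
by apply: contraTneq bidir_uw => ->; rewrite /bidir eqxx.
Qed.

Lemma acag_latent_embedding : latent_embedding (acy G) (acag G) i.
Proof.
split.
- exact: aug_in_inj.
- exact: acy_aug_edges.
- by move=> a l /(acy_aug_no_parent a) ->.
- by move=> a l _; rewrite bidir_singleton_complex.
- by move=> u w; rewrite bidir_singleton_complex.
- by move=> u w /acy_aug_represents_bidir; right.
- exact: acy_aug_fork_bidir.
Qed.

Lemma acy_aug_latent_embedding : latent_embedding (acy G) AA i.
Proof.
split.
- exact: aug_in_inj.
- exact: acy_aug_edges.
- by move=> a l /(acy_aug_no_parent a) ->.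
- exact: acy_aug_latent_no_bidir.
- exact: acy_aug_bidir.
- by move=> u w /acy_aug_represents_bidir; right.
- exact: acy_aug_fork_bidir.
Qed.

End AcyclifiedAugmentation.

Unset Implicit Arguments.

Theorem mainTheorem7 (V : finType) (G : hedg V) (X Y Z : {set V}) :
  is_hedg G ->
  [<-> sigma_sep G X Y Z;
       sigma_sep (aug G) (aug_set (hyper G) X) (aug_set (hyper G) Y)
                 (aug_set (hyper G) Z);
       d_sep (acy G) X Y Z;
       d_sep (acag G) (aug_set (hyper G) X) (aug_set (hyper G) Y)
                 (aug_set (hyper G) Z);
       d_sep (acy (aug G)) (aug_set (hyper G) X) (aug_set (hyper G) Y)
                 (aug_set (hyper G) Z);
       d_sep (aug (acy G)) (aug_set (hyper (acy G)) X)
                 (aug_set (hyper (acy G)) Y) (aug_set (hyper (acy G)) Z)].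
Proof.
move=> hG.
have i_iii := sigma_sep_acy X Y Z hG.
have ii_v := sigma_sep_acy (aug_set (hyper G) X) (aug_set (hyper G) Y)
  (aug_set (hyper G) Z) (singleton_complex_hedg (aug_edges G)).
have iii_iv := d_sep_latent_embedding X Y Z (acag_latent_embedding hG).
have iii_v := d_sep_latent_embedding X Y Z (acy_aug_latent_embedding hG).
have iii_vi := d_sep_latent_embedding X Y Z (aug_latent_embedding (acy_hedg hG)).
by tfae=> [/i_iii/iii_v/ii_v | /ii_v/iii_v | /iii_iv | /iii_iv/iii_v |
           /iii_v/iii_vi | /iii_vi/i_iii].
Qed.
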